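(* Let $p\in(1,\infty)$, $r,h>0$ and $\phi\in L^\infty(\Omega_r)$. (a) There exists a unique $\psi\in L^\infty(\Omega)$ such that $-L[\psi,\phi](x)=f(x)$ for all $x\in\Omega$. (b) If $\psi_1,\psi_2:\Omega\to\mathbb{R}$ satisfy $-L[\psi_1,\phi](x)\le f(x)$ and $-L[\psi_2,\phi](x)\ge f(x)$ for all $x\in\Omega$, then $\psi_1\le\psi_2$ in $\Omega$.
   Context: $\Omega\subset\mathbb{R}^d$ is a bounded open set, $f\in C(\overline\Omega)$, $\partial\Omega_r:=\{x\in\mathbb{R}^d\setminus\Omega:\operatorname{dist}(x,\Omega)\le r\}$, $\Omega_r=\Omega\cup\partial\Omega_r$. $J_p(t)=|t|^{p-2}t$ ($J_p(0)=0$); $B_r$ open ball of radius $r$ at $0$; $\omega_d=|B_1|$; $D_{d,p}=\frac{d}{2(d+p)}\fint_{\partial B_1}|y_1|^p\,d\sigma(y)$; $\mathcal G_h=h\mathbb Z^d=\{y_\alpha=h\alpha\}$. For $\psi:\Omega\to\mathbb{R}$ and $\phi:\Omega_r\to\mathbb{R}$, \[ L[\psi,\phi](x):=\frac{h^d}{D_{d,p}\,\omega_d\,r^{p+d}}\sum_{y_\alpha\in\mathcal G_h\cap B_r}J_p\big(\phi(x+y_\alpha)-\psi(x)\big),\qquad x\in\Omega. \] *)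

From HB Require Import structures.
From mathcomp Require Import all_boot all_order all_algebra.
From mathcomp Require Import all_classical all_reals all_analysis.
Set Implicit Arguments. Unset Strict Implicit. Unset Printing Implicit Defensive.
Import Order.TTheory GRing.Theory Num.Theory.
Import numFieldNormedType.Exports.
Local Open Scope classical_set_scope.
Local Open Scope ring_scope.

Section Defs.
Variables (R : realType) (d : nat).

(* Euclidean norm on R^d (the library norm on 'rV is the max norm). *)
Definition enorm (x : 'rV[R]_d) : R := Num.sqrt (\sum_(i < d) x ord0 i ^+ 2).

Definition edist (Omega : set 'rV[R]_d) (x : 'rV[R]_d) : R :=
  inf [set enorm (x - z) | z in Omega].

Definition bdry_r (Omega : set 'rV[R]_d) (r : R) : set 'rV[R]_d :=
  [set x | ~ Omega x /\ edist Omega x <= r].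

Definition Omega_r (Omega : set 'rV[R]_d) (r : R) : set 'rV[R]_d :=
  Omega `|` bdry_r Omega r.

Definition Jp (p t : R) : R := if t == 0 then 0 else powR `|t| (p - 2) * t.

Definition gridpt (h : R) (a : 'rV[int]_d) : 'rV[R]_d :=
  h *: map_mx (fun z : int => z%:~R) a.

Definition grid_ball (h r : R) : set 'rV[int]_d :=
  [set a | enorm (gridpt h a) < r].

(* L[psi,phi](x) with the normalisation D_{d,p} * omega_d replaced by a
   parameter c. *)
Definition Lop (c p r h : R) (psi phi : 'rV[R]_d -> R) (x : 'rV[R]_d) : R :=
  h ^+ d / (c * powR r (p + d%:R)) *
  (\sum_(a \in grid_ball h r) Jp p (phi (x + gridpt h a) - psi x))%R.

End Defs.

From Pilot Require Import Defs.
From HB Require Import structures.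
From mathcomp Require Import all_boot all_order all_algebra.
From mathcomp Require Import all_classical all_reals all_analysis.
From mathcomp Require Import lra zify.
Import Order.TTheory GRing.Theory Num.Theory.
Import numFieldNormedType.Exports.
Local Open Scope classical_set_scope.
Local Open Scope ring_scope.
Set Implicit Arguments. Unset Strict Implicit.

(* With q := p - 1 we have J_p(t) = sgn(t) |t|^q, an odd,
   continuous, strictly increasing bijection of R.  The set of grid indices
   alpha with |h alpha| < r is finite and contains alpha = 0, so
     L[psi,phi](x) = K * G_x(psi x),   G_x(t) := sum_alpha J_q(phi(x+y_alpha) - t)
   with K > 0.  The equation at the point x thus only involves the single
   number psi x, and G_x is continuous and strictly decreasing (the alpha = 0
   term is strictly decreasing, the others non-increasing).  Hence:
   - comparison (b) and uniqueness hold pointwise by strict monotonicity;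
   - existence follows pointwise from the intermediate value theorem, with
     the bound |psi x| <= |B| + (|F|/K)^(1/q), where B bounds phi on Omega_r
     and F bounds the continuous f on the compact closure of Omega. *)

Section SignedPower.
Variable R : realType.
Implicit Types q s t v : R.

Definition J q s : R := if s < 0 then - powR (- s) q else powR s q.

Definition Jinv q v : R := if v < 0 then - powR (- v) q^-1 else powR v q^-1.

Lemma J_pos q s : 0 <= s -> J q s = powR s q.
Proof. by move=> s0; rewrite /J ltNge s0. Qed.

Lemma J_neg q s : 0 < q -> 0 <= s -> J q (- s) = - powR s q.
Proof.
move=> q0; rewrite le_eqVlt => /orP[/eqP<-|s0].
  by rewrite oppr0 J_pos // powR0 ?oppr0 // gt_eqF.
by rewrite /J oppr_lt0 s0 opprK.
Qed.

Lemma Jp_J p s : 1 < p -> Jp p s = J (p - 1) s.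
Proof.
move=> p1; rewrite /Jp /J.
have q0 : 0 < p - 1 by rewrite subr_gt0.
have e : p - 2 = (p - 1) - 1 by rewrite -addrA -opprD.
case: eqP => [->|/eqP s0]; first by rewrite ltxx powR0 // gt_eqF.
case: ltP => sl.
  rewrite ltr0_norm // e.
  have -> : (- s) `^ (p - 1 - 1) * s = - ((- s) * (- s) `^ (p - 1 - 1)).
    by rewrite mulrC mulNr opprK.
  by rewrite mulr_powRB1 // oppr_ge0 ltW.
by rewrite ger0_norm // e mulrC mulr_powRB1.
Qed.

Lemma JK q v : 0 < q -> J q (Jinv q v) = v.
Proof.
move=> q0; rewrite /Jinv; case: ltP => v0.
  rewrite J_neg // ?powR_ge0 // -powRrM mulVf ?gt_eqF // powRr1 ?opprK //.
  by rewrite oppr_ge0 ltW.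
by rewrite J_pos ?powR_ge0 // -powRrM mulVf ?gt_eqF // powRr1.
Qed.

Lemma J_lt q s t : 0 < q -> s < t -> J q s < J q t.
Proof.
move=> q0 st; rewrite /J.
case: (ltP s 0) => s0; case: (ltP t 0) => t0.
- rewrite ltrN2; apply: gt0_ltr_powR => //; rewrite ?nnegrE ?oppr_ge0 ?ltW //.
  lra.
- apply: (@lt_le_trans _ _ 0); last exact: powR_ge0.
  by rewrite oppr_lt0 powR_gt0 // oppr_gt0.
- by move: (lt_trans st t0); rewrite ltNge s0.
- by apply: gt0_ltr_powR => //; rewrite nnegrE.
Qed.

Lemma J_le q s t : 0 < q -> s <= t -> J q s <= J q t.
Proof. by move=> q0; rewrite le_eqVlt => /orP[/eqP->//|st]; exact/ltW/J_lt. Qed.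

(* A monotone surjection of R is continuous. *)
Lemma J_cont q : 0 < q -> continuous (J q).
Proof.
move=> q0 x.
have J_mono : {mono J q : u v / u <= v} by apply: le_mono => u v; exact: J_lt.
have ab : x - 1 < x + 1 by lra.
have xin : x \in `]x - 1, x + 1[ by rewrite in_itv /=; apply/andP; split; lra.
apply: (within_continuous_continuous ab _ xin).
apply: segment_inc_surj_continuous; first by move=> u v _ _; rewrite J_mono.
move=> v /=; rewrite in_itv /= => /andP[v1 v2].
exists (Jinv q v); last exact: JK.
by rewrite in_itv /= -(J_mono (x - 1)) -(J_mono _ (x + 1)) JK // v1 v2.
Qed.

End SignedPower.

(* The scalar function G(t) = sum_a J_q(b_a - t) over a finite nonempty list
   of indices: the value of the operator at one point as a function of the
   unknown value t. *)
Section DecreasingSum.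
Variables (R : realType) (I : eqType) (q : R) (s : seq I) (b : I -> R).
Hypotheses (q0 : 0 < q) (s_neq0 : s != [::]).

Definition Gsum (t : R) : R := \sum_(a <- s) J q (b a - t).

Lemma Gsum_lt t t' : t < t' -> Gsum t' < Gsum t.
Proof.
move=> tt'; rewrite /Gsum; case: s s_neq0 => [//|a0 s'] _; rewrite !big_cons.
apply: ltr_leD; first by apply: J_lt => //; lra.
by apply: ler_sum => a _; apply: J_le => //; lra.
Qed.

Lemma Gsum_cont : continuous Gsum.
Proof.
rewrite /Gsum; elim: s => [|a l IH].
  under eq_fun do rewrite big_nil; exact: cst_continuous.
under eq_fun do rewrite big_cons.
move=> t; apply: (@continuousD _ _ _ (fun t => J q (b a - t))); last exact: IH.
apply: (@continuous_comp _ _ _ (fun t => b a - t) (J q)); last exact: J_cont.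
by apply: cvgB; [exact: cvg_cst | exact: cvg_id].
Qed.

Variable B : R.
Hypothesis b_bound : forall a, a \in s -> `|b a| <= B.

(* Far to the left of the data G exceeds T^q, far to the right it is below
   -T^q: there every term is >= T^q (resp. <= -T^q) and there is at least
   one term. *)
Lemma Gsum_bounds T : 0 <= T ->
  powR T q <= Gsum (- (`|B| + T)) /\ Gsum (`|B| + T) <= - powR T q.
Proof.
move=> T0; have P0 : 0 <= powR T q := powR_ge0 _ _.
have bB a : a \in s -> - `|B| <= b a <= `|B|.
  move=> /b_bound; rewrite ler_norml => /andP[l u].
  by have := ler_norm B; move=> ?; apply/andP; split; lra.
have lo a : a \in s -> powR T q <= J q (b a - - (`|B| + T)).
  move=> /bB /andP[l u]; rewrite -J_pos //; apply: J_le => //; lra.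
have hi a : a \in s -> J q (b a - (`|B| + T)) <= - powR T q.
  move=> /bB /andP[l u]; rewrite -J_neg //; apply: J_le => //; lra.
rewrite /Gsum; case: s s_neq0 lo hi => [//|a0 s'] _ lo hi; rewrite !big_cons.
have a0s : a0 \in a0 :: s' := mem_head _ _.
have in_s a : a \in s' -> a \in a0 :: s' by rewrite in_cons orbC => ->.
split.
  have : 0 <= \sum_(a <- s') J q (b a - - (`|B| + T)).
    by rewrite big_seq; apply: sumr_ge0 => a /in_s/lo; lra.
  by have := lo a0 a0s; lra.
have : \sum_(a <- s') J q (b a - (`|B| + T)) <= 0.
  by rewrite big_seq; apply: sumr_le0 => a /in_s/hi; lra.
by have := hi a0 a0s; lra.
Qed.

Lemma Gsum_solve (Y y : R) : `|y| <= Y ->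
  exists t, `|t| <= `|B| + powR Y q^-1 /\ Gsum t = y.
Proof.
move=> yY; set T := powR Y q^-1; set hi := `|B| + T.
have Y0 : 0 <= Y := le_trans (normr_ge0 y) yY.
have TY : powR T q = Y by rewrite /T -powRrM mulVf ?gt_eqF // powRr1.
have [Glo Ghi] := Gsum_bounds (powR_ge0 Y q^-1); rewrite -/T -/hi TY in Glo Ghi.
move: yY; rewrite ler_norml => /andP[y1 y2].
have lohi : - hi <= hi by rewrite /hi /T; have := normr_ge0 B; have := powR_ge0 Y q^-1; lra.
have cG : {within `[- hi, hi], continuous Gsum}.
  by apply: continuous_subspaceT; exact: Gsum_cont.
have mm : Num.min (Gsum (- hi)) (Gsum hi) <= y <= Num.max (Gsum (- hi)) (Gsum hi).
  by apply/andP; split; [rewrite ge_min; apply/orP; right | rewrite le_max]; lra.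
have [t tin Gt] := IVT lohi cG mm; exists t; split => //.
by rewrite ler_norml; move: tin; rewrite in_itv.
Qed.

End DecreasingSum.

Section Grid.
Variables (R : realType) (d : nat).

Lemma enorm_ge0 (x : 'rV[R]_d) : 0 <= enorm x.
Proof. exact: sqrtr_ge0. Qed.

Lemma enorm_entry (x : 'rV[R]_d) i : `|x ord0 i| <= enorm x.
Proof.
have sq0 j : 0 <= x ord0 j ^+ 2 := sqr_ge0 _.
rewrite -ler_sqr ?nnegrE ?enorm_ge0 // real_normK ?num_real //.
rewrite /enorm sqr_sqrtr; last by apply: sumr_ge0.
by rewrite (bigD1 i) //= lerDl; apply: sumr_ge0.
Qed.

Lemma enorm0 : enorm (0 : 'rV[R]_d) = 0.
Proof.
rewrite /enorm (eq_bigr (fun _ => 0)); first by rewrite big1 // sqrtr0.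
by move=> i _; rewrite mxE expr0n.
Qed.

Lemma grid_ball0 (h r : R) : 0 < r -> grid_ball h r (0 : 'rV[int]_d).
Proof.
move=> r0; rewrite /grid_ball /= /gridpt.
have -> : map_mx (fun z : int => z%:~R) (0 : 'rV[int]_d) = 0 :> 'rV[R]_d.
  by apply/rowP => i; rewrite !mxE.
by rewrite scaler0 enorm0.
Qed.

Lemma grid_ball_coord (h r : R) (N : nat) (a : 'rV[int]_d) i :
  0 < h -> `|r| / h < N%:R -> grid_ball h r a ->
  - (N%:Z) < a ord0 i < N%:Z.
Proof.
move=> h0 rN; rewrite /grid_ball /= => ha.
have := enorm_entry (gridpt h a) i; rewrite /gridpt !mxE normrM gtr0_norm //.
have hN : `|r| < h * N%:R by rewrite -ltr_pdivrMl // mulrC.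
have := ler_norm r => rr hz.
have : `|(a ord0 i)%:~R : R| < N%:R by rewrite -(ltr_pM2l h0); lra.
by rewrite ltr_norml -!(ltr_int R) mulrNz.
Qed.

(* Only finitely many grid points lie in a ball: they are contained in the
   image of the finite cube {-N, ..., N}^d. *)
Lemma grid_ball_finite (h r : R) : 0 < h -> finite_set (grid_ball (d:=d) h r).
Proof.
move=> h0; set N := Num.Def.archi_bound (`|r| / h).
have rN : `|r| / h < N%:R by exact: unstable.ltr_bound.
pose F (k : {ffun 'I_d -> 'I_(N + N).+1}) : 'rV[int]_d :=
  \row_i ((k i : nat)%:Z - N%:Z).
apply: (@sub_finite_set _ _ (F @` setT)); last exact: finite_image.
move=> a ha; exists [ffun i => inord (absz (a ord0 i + N%:Z)%R)] => //.
apply/rowP => i; rewrite !mxE ffunE.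
have /andP[b1 b2] := grid_ball_coord i h0 rN ha.
rewrite inordK; last by lia.
by rewrite gez0_abs ?addrK //; lia.
Qed.

End Grid.

Lemma in_Omega_r (R : realType) d (Omega : set 'rV[R]_d) (r : R) x y :
  Omega x -> enorm y < r -> Omega_r Omega r (x + y).
Proof.
move=> Ox yr; rewrite /Omega_r.
case: (pselect (Omega (x + y))) => H; [by left | right; split => //].
have : Defs.edist Omega (x + y) <= enorm y.
  apply: ge_inf; first by exists 0 => _ [z _ <-]; exact: enorm_ge0.
  by exists x => //; rewrite addrAC subrr add0r.
lra.
Qed.

(* A function continuous on the closure of a bounded set is bounded on the
   set, because that closure is compact. *)
Lemma continuous_closure_bounded (R : realType) d (Omega : set 'rV[R]_d)
  (f : 'rV[R]_d -> R) :
  bounded_set Omega -> {within closure Omega, continuous f} ->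
  exists F : R, forall x, Omega x -> `|f x| <= F.
Proof.
case=> M [_ HM] cf; set M' := `|M| + 1.
have M'M : M < M' by rewrite /M'; have := ler_norm M; lra.
have M'0 : 0 < M' by rewrite /M'; have := normr_ge0 M; lra.
have sub : closure Omega `<=` closed_ball (0 : 'rV[R]_d) M'.
  rewrite [X in _ `<=` X](closure_id _).1; last exact: closed_ball_closed.
  apply: closureS => y Oy; rewrite closed_ballE /closed_ball_ /=; last lra.
  by rewrite distrC subr0; exact: HM Oy.
have cb : bounded_set (closure Omega).
  exists M'; split; first exact: num_real.
  move=> N NM y /sub; rewrite closed_ballE // /closed_ball_ /= distrC subr0.
  by move=> yM; rewrite /=; lra.
have cK := bounded_closed_compact cb (@closed_closure _ Omega).
have [F [_ HF]] := compact_bounded (continuous_compact cf cK).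
exists (F + 1) => x Ox; apply: (HF (F + 1)); first lra.
by exists x => //; exact: subset_closure.
Qed.

Section Operator.
Variables (R : realType) (d : nat) (c p r h : R) (phi : 'rV[R]_d -> R).
Hypotheses (c0 : 0 < c) (p1 : 1 < p) (r0 : 0 < r) (h0 : 0 < h).

Definition grid_seq : seq 'rV[int]_d :=
  finmap.enum_fset (fset_set (grid_ball h r)).

Lemma mem_grid_seq a : (a \in grid_seq) = `[< grid_ball h r a >].
Proof.
by rewrite /grid_seq (in_fset_set (@grid_ball_finite R d h r h0)) /=; apply/idP/idP;
  [move/set_mem/asboolP | move/asboolP/mem_set].
Qed.

Lemma grid_seq_neq0 : grid_seq != [::].
Proof.
apply/eqP => e; have := mem_grid_seq 0; rewrite e in_nil.
by move/esym/asboolP; apply; exact: grid_ball0.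
Qed.

Definition Lconst : R := h ^+ d / (c * powR r (p + d%:R)).

Lemma Lconst_gt0 : 0 < Lconst.
Proof. by rewrite divr_gt0 ?exprn_gt0 // mulr_gt0 // powR_gt0. Qed.

Lemma Lop_Gsum psi x : Lop c p r h psi phi x =
  Lconst * Gsum (p - 1) grid_seq (fun a => phi (x + gridpt h a)) (psi x).
Proof.
rewrite /Lop fsbig_finite; last exact: (@grid_ball_finite R d h r h0).
by congr (_ * _); apply: eq_bigr => a _; exact: Jp_J.
Qed.

Let q0 : 0 < p - 1. Proof. by rewrite subr_gt0. Qed.

Lemma Lop_comparison psi1 psi2 x y :
  - Lop c p r h psi1 phi x <= y -> y <= - Lop c p r h psi2 phi x ->
  psi1 x <= psi2 x.
Proof.
rewrite !Lop_Gsum => sub super; rewrite leNgt; apply/negP => lt21.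
have := Gsum_lt (fun a => phi (x + gridpt h a)) q0 grid_seq_neq0 lt21.
by rewrite -(ltr_pM2l Lconst_gt0); lra.
Qed.

Lemma Lop_solve x B Y y :
  (forall a, grid_ball h r a -> `|phi (x + gridpt h a)| <= B) -> `|y| <= Y ->
  exists t, `|t| <= `|B| + powR (Y / Lconst) (p - 1)^-1 /\
    forall psi, psi x = t -> - Lop c p r h psi phi x = y.
Proof.
move=> phiB yY.
have bnd a : a \in grid_seq -> `|phi (x + gridpt h a)| <= B.
  by rewrite mem_grid_seq => /asboolP; exact: phiB.
have yK : `|- y / Lconst| <= Y / Lconst.
  by rewrite normrM normrN gtr0_norm ?invr_gt0 ?Lconst_gt0 // ler_pM2r
    ?invr_gt0 ?Lconst_gt0.
have [t [tb Gt]] := Gsum_solve q0 grid_seq_neq0 bnd yK.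
exists t; split => // psi psi_x; rewrite Lop_Gsum psi_x Gt mulrC divfK ?opprK //.
exact: lt0r_neq0 Lconst_gt0.
Qed.

End Operator.

Theorem lemma4p3 (R : realType) (d : nat) (Omega : set 'rV[R]_d)
  (f : 'rV[R]_d -> R) (c p r h : R) (phi : 'rV[R]_d -> R) :
  open Omega -> bounded_set Omega ->
  {within closure Omega, continuous f} ->
  0 < c -> 1 < p -> 0 < r -> 0 < h ->
  (exists M : R, forall x, Omega_r Omega r x -> `|phi x| <= M) ->
  (* (a) existence and uniqueness of a bounded solution *)
  ((exists psi : 'rV[R]_d -> R,
      (exists M : R, forall x, Omega x -> `|psi x| <= M) /\
      (forall x, Omega x -> - Lop c p r h psi phi x = f x)) /\
   (forall psi1 psi2 : 'rV[R]_d -> R,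
      (exists M : R, forall x, Omega x -> `|psi1 x| <= M) ->
      (exists M : R, forall x, Omega x -> `|psi2 x| <= M) ->
      (forall x, Omega x -> - Lop c p r h psi1 phi x = f x) ->
      (forall x, Omega x -> - Lop c p r h psi2 phi x = f x) ->
      forall x, Omega x -> psi1 x = psi2 x)) /\
  (* (b) comparison principle *)
  (forall psi1 psi2 : 'rV[R]_d -> R,
      (forall x, Omega x -> - Lop c p r h psi1 phi x <= f x) ->
      (forall x, Omega x -> - Lop c p r h psi2 phi x >= f x) ->
      forall x, Omega x -> psi1 x <= psi2 x).
Proof.
move=> _ bO cf c0 p1 r0 h0 [B phiB].
have comparison psi1 psi2 :
    (forall x, Omega x -> - Lop c p r h psi1 phi x <= f x) ->
    (forall x, Omega x -> - Lop c p r h psi2 phi x >= f x) ->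
    forall x, Omega x -> psi1 x <= psi2 x.
  by move=> sub super x Ox; exact: (Lop_comparison c0 p1 r0 h0 (sub x Ox) (super x Ox)).
split; last exact: comparison.
split; last first.
  move=> psi1 psi2 _ _ eq1 eq2 x Ox; apply: le_anti; apply/andP; split.
    by apply: comparison => // y Oy; [rewrite eq1 | rewrite eq2].
  by apply: comparison => // y Oy; [rewrite eq2 | rewrite eq1].
have [F fF] := continuous_closure_bounded bO cf.
set M := `|B| + powR (F / Lconst d c p r h) (p - 1)^-1.
have pointwise x : exists t, Omega x -> `|t| <= M /\
    forall psi, psi x = t -> - Lop c p r h psi phi x = f x.
  have [Ox|nOx] := pselect (Omega x); last by exists 0.
  have phiB' a : grid_ball h r a -> `|phi (x + gridpt h a)| <= B.
    by move=> ha; apply: phiB; exact: (in_Omega_r Ox ha).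
  have [t ht] := Lop_solve c0 p1 r0 h0 phiB' (fF x Ox).
  by exists t.
have [psi Hpsi] := choice pointwise.
exists psi; split; first by exists M => x /Hpsi[].
by move=> x /Hpsi[_]; apply.
Qed.
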